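(* Let $k,m$ be integers with $0<k$ and $2k<m$, and let $n=2k-1$. Then $\alpha(m,n,k)=\binom{n}{k}=h(m,n,k)$, and $\binom{[n]}{k}$ is the unique $(m,n,k)$-intersecting family of maximum cardinality.
   Context: For positive integers $a\leqslant b$, $[a,b]=\{a,a+1,\dots,b\}$ and $[a]=[1,a]$; $\binom{X}{k}$ denotes the family of all $k$-subsets of a set $X$. A family of sets is intersecting if no two of its members are disjoint. For integers $0<k\leqslant n<2k\leqslant m$, an $(m,n,k)$-intersecting family is an intersecting family $\mathcal{F}$ with $\binom{[n]}{k}\subseteq\mathcal{F}\subseteq\binom{[m]}{k}$, and $\alpha(m,n,k)$ is the maximum cardinality of an $(m,n,k)$-intersecting family. Define $h(m,n,k)=\binom{n}{k}+\sum_{i=1}^{2k-n-1}\binom{n-1}{k-i-1}\binom{m-n}{i}$ (an empty sum is $0$). *)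

From mathcomp Require Import all_boot.
Set Implicit Arguments. Unset Strict Implicit. Unset Printing Implicit Defensive.

(* Ground set [m] = {1,...,m} is represented by 'I_m = {0,...,m-1}
   (element i of 'I_m stands for i+1); [n] is then {i : 'I_m | i < n}. *)

Definition intersecting (T : finType) (F : {set {set T}}) : bool :=
  [forall A in F, forall B in F, A :&: B != set0].

Definition binom (T : finType) (X : {set T}) (k : nat) : {set {set T}} :=
  [set A : {set T} | (A \subset X) && (#|A| == k)].

Definition initial (m n : nat) : {set 'I_m} := [set i : 'I_m | i < n].

Definition mnk_intersecting (m n k : nat) (F : {set {set 'I_m}}) : bool :=
  [&& intersecting F,
      binom (initial m n) k \subset F &
      F \subset binom [set: 'I_m] k].

Definition alpha (m n k : nat) : nat :=
  \max_(F : {set {set 'I_m}} | mnk_intersecting n k F) #|F|.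

Definition h (m n k : nat) : nat :=
  'C(n, k) + \sum_(1 <= i < (2 * k - n)) 'C(n.-1, k - i - 1) * 'C(m - n, i).

(* A member A of an (m,n,k)-intersecting family must meet every k-subset of
   [n], so [n] \ A has fewer than k elements.  When n = 2k-1 this forces
   |A ∩ [n]| >= k = |A|, i.e. A ⊆ [n]; and the k-subsets of a (2k-1)-set
   pairwise intersect.  Hence [n] choose k is the only (m,n,k)-intersecting
   family, and the sum defining h is empty since 2k - n = 1. *)
From mathcomp Require Import all_boot.
From mathcomp Require Import zify.

Set Implicit Arguments. Unset Strict Implicit. Unset Printing Implicit Defensive.

Section IntersectingFamilies.

Variable T : finType.

Lemma intersectingP (F : {set {set T}}) A B :
  intersecting F -> A \in F -> B \in F -> A :&: B != set0.
Proof. by move=> /forallP/(_ A)/implyP FI /FI/forallP/(_ B)/implyP. Qed.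

Lemma binomP (X A : {set T}) k : reflect (A \subset X /\ #|A| = k) (A \in binom X k).
Proof. by rewrite inE; apply: (iffP andP) => -[-> /eqP]. Qed.

Lemma binom_intersecting (X : {set T}) k : #|X| < 2 * k -> intersecting (binom X k).
Proof.
move=> cardX; apply/forallP=> A; apply/implyP=> /binomP[AX cardA].
apply/forallP=> B; apply/implyP=> /binomP[BX cardB]; apply/negP=> /eqP AB0.
have := cardsU A B; rewrite AB0 cards0 subn0 cardA cardB => cardAB.
have := subset_leq_card (introT subUsetP (conj AX BX)); rewrite cardAB; lia.
Qed.

Lemma intersecting_card_setD (F : {set {set T}}) (X A : {set T}) k :
  intersecting F -> binom X k \subset F -> A \in F -> #|X :\: A| < k.
Proof.
move=> FI XkF AF; rewrite ltnNge; apply/negP=> cardXA.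
have [B] : exists B, B \in binom (X :\: A) k.
  by apply/card_gt0P; rewrite cards_draws bin_gt0.
move=> /binomP[BXA cardB].
have BF : B \in F.
  apply: (subsetP XkF); apply/binomP; split=> //.
  exact: subset_trans BXA (subsetDl X A).
have := intersectingP FI AF BF; apply/negP; rewrite negbK.
by apply/eqP/setP=> x; rewrite !inE; apply/andP=> -[xA /(subsetP BXA)]; rewrite inE xA.
Qed.

Lemma intersecting_binom_sub_eq (F : {set {set T}}) (X : {set T}) k :
  #|X| = 2 * k - 1 -> intersecting F ->
  binom X k \subset F -> F \subset binom [set: T] k -> F = binom X k.
Proof.
move=> cardX FI XkF FkT; apply/eqP; rewrite eqEsubset XkF andbT.
apply/subsetP=> A AF; have /binomP[_ cardA] := subsetP FkT _ AF.
apply/binomP; split=> //.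
have small := intersecting_card_setD FI XkF AF.
have split_X := cardsID A X.
have XA_A : X :&: A = A.
  apply/eqP; rewrite eqEcard subsetIr cardA; lia.
by rewrite -XA_A subsetIl.
Qed.

End IntersectingFamilies.

Lemma card_initial m n : n <= m -> #|initial m n| = n.
Proof.
move=> le_nm; have widen_inj : injective (widen_ord le_nm).
  by move=> i j /(congr1 val) /= /val_inj.
rewrite -[RHS]card_ord -(card_imset _ widen_inj).
apply: eq_card=> i; rewrite inE; apply/idP/imsetP=> [lt_in | [j _ ->]].
  by exists (Ordinal lt_in) => //; apply: val_inj.
by rewrite /= ltn_ord.
Qed.

Theorem proposition6 (k m n : nat) :
  0 < k -> 2 * k < m -> n = 2 * k - 1 ->
  [/\ alpha m n k = 'C(n, k),
      'C(n, k) = h m n k &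
      forall F : {set {set 'I_m}},
        mnk_intersecting n k F -> #|F| = alpha m n k ->
        F = binom (initial m n) k].
Proof.
move=> k_gt0 km n_eq.
have card_n : #|initial m n| = n by apply: card_initial; lia.
have unique_family F : mnk_intersecting n k F -> F = binom (initial m n) k.
  by case/and3P; apply: intersecting_binom_sub_eq; rewrite card_n.
have binom_n_mnk : mnk_intersecting n k (binom (initial m n) k).
  rewrite /mnk_intersecting binom_intersecting ?card_n ?subxx /=; last by lia.
  by apply/subsetP=> A /binomP[_ cardA]; apply/binomP; rewrite subsetT.
have card_binom_n : #|binom (initial m n) k| = 'C(n, k).
  by rewrite /binom cards_draws card_n.
have alpha_n : alpha m n k = 'C(n, k).
  apply/eqP; rewrite eqn_leq -{2}card_binom_n (leq_bigmax_cond _ binom_n_mnk) andbT.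
  by apply/bigmax_leqP=> F /unique_family ->; rewrite card_binom_n.
split=> // [|F /unique_family //].
by rewrite /h (_ : 2 * k - n = 1) ?big_geq ?addn0 //; lia.
Qed.
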